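(* Let $A_0$ be a group with finite presentation $\langle\mathcal A:\mathcal R\rangle$, let $q:F(\mathcal A)\to A_0$ be the quotient map with $q(a)=a$, and let $\phi_0:A_0\to A_0$ be a homomorphism with nontrivial kernel $K_0$ and $\phi:F(\mathcal A)\to F(\mathcal A)$ a homomorphism such that $q\circ\phi=\phi_0\circ q$. If the ascending sequence $K_i=\phi_0^{-i}(K_0)=\ker(\phi_0^{i+1})$ of normal subgroups of $A_0$ does not stabilize (in particular, when $\phi_0$ is an epimorphism), then the group $G$ with ascending HNN presentation $\mathcal P=\langle t,\mathcal A:\mathcal R,\ t^{-1}at=\phi(a)\ \text{for all } a\in\mathcal A\rangle$ has unbounded depth.
   Context: $F(\mathcal A)$ is the free group on the finite set $\mathcal A$. Let $N_0=N(\bigcup_{j\ge0}\phi^j(\mathcal R))$ be the normal closure in $F(\mathcal A)$ of $\bigcup_{j\ge 0}\phi^j(\mathcal R)$ and $N^\infty=\bigcup_{i\ge0}\phi^{-i}(N_0)$. The presentation $\mathcal P$ has bounded depth if $N^\infty=\bigcup_{i=0}^B\phi^{-i}(N_0)$ for some integer $B\ge0$, and unbounded depth otherwise. *)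

From Stdlib Require List.
From mathcomp Require Import all_boot.
Set Implicit Arguments.
Unset Strict Implicit.
Unset Printing Implicit Defensive.

Section FreeGroup.
Variable A : finType.

(* a letter (a, false) is the generator a, (a, true) is a^-1 *)
Definition letter := (A * bool)%type.
Definition linv (l : letter) : letter := (l.1, ~~ l.2).

Definition reduced (w : seq letter) : bool := sorted (fun x y => y != linv x) w.

Definition cons_red (l : letter) (w : seq letter) : seq letter :=
  match w with
  | l' :: w' => if l' == linv l then w' else l :: w
  | [::] => [:: l]
  end.

Definition reduce (u : seq letter) : seq letter := foldr cons_red [::] u.

Lemma cons_red_reduced l w : reduced w -> reduced (cons_red l w).
Proof.
case: w => [|l' w] //= Hw.
case: ifP => [_|/negbT Hne]; first exact: (path_sorted Hw).
by rewrite /reduced /= Hne.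
Qed.

Lemma reduce_reduced u : reduced (reduce u).
Proof. by elim: u => [|l u IH] //=; apply: cons_red_reduced. Qed.

Record FG := MkFG { fg_val : seq letter; fg_red : reduced fg_val }.

Definition fg_of (u : seq letter) : FG := MkFG (reduce_reduced u).
Definition fg_one : FG := MkFG (isT : reduced [::]).
Definition fg_mul (x y : FG) : FG := fg_of (fg_val x ++ fg_val y).
Definition fg_inv (x : FG) : FG := fg_of (rev (map linv (fg_val x))).
Definition fg_gen (a : A) : FG := fg_of [:: (a, false)].

Definition fg_hom (f : FG -> FG) : Prop :=
  forall x y, f (fg_mul x y) = fg_mul (f x) (f y).

Inductive ncl (S : FG -> Prop) : FG -> Prop :=
  | ncl_conj s g : S s -> ncl S (fg_mul (fg_inv g) (fg_mul s g))
  | ncl_one : ncl S fg_one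
  | ncl_mul x y : ncl S x -> ncl S y -> ncl S (fg_mul x y)
  | ncl_inv x : ncl S x -> ncl S (fg_inv x).

(* Depth of the ascending HNN presentation <t, A : R, t^-1 a t = phi a> *)
Definition N0 (R : seq FG) (phi : FG -> FG) : FG -> Prop :=
  ncl (fun w => exists j r, List.In r R /\ w = iter j phi r).

Definition Ninf (R : seq FG) (phi : FG -> FG) : FG -> Prop :=
  fun w => exists i, N0 R phi (iter i phi w).

Definition bounded_depth (R : seq FG) (phi : FG -> FG) : Prop :=
  exists B : nat, forall w,
    Ninf R phi w <-> exists i, i <= B /\ N0 R phi (iter i phi w).

Definition unbounded_depth (R : seq FG) (phi : FG -> FG) : Prop :=
  ~ bounded_depth R phi.

End FreeGroup.

Record is_group (G : Type) (mul : G -> G -> G) (inv : G -> G) (one : G) : Prop := {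
  grp_assoc : forall x y z, mul x (mul y z) = mul (mul x y) z;
  grp_id_l : forall x, mul one x = x;
  grp_inv_l : forall x, mul (inv x) x = one }.

From mathcomp Require Import all_boot.

(* If the depth were bounded by B, lift any x in ker(phi_0^(m+1)) to a word w.
   Then phi^(m+1)(w) lies in N(R), which is contained in N_0, so w lies in N^infty,
   hence phi^i(w) lies in N_0 for some i <= B.  Since N_0 is killed by q, this gives
   phi_0^i(x) = 1: thus ker(phi_0^m) = ker(phi_0^B) for all m >= B. *)

Set Implicit Arguments.
Unset Strict Implicit.
Unset Printing Implicit Defensive.

Section GroupAxioms.
Variables (G : Type) (mul : G -> G -> G) (inv : G -> G) (one : G).
Hypothesis HG : is_group mul inv one.

Lemma mulg_idem_eq1 y : mul y y = y -> y = one.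
Proof.
move=> yy; have := grp_inv_l HG y.
by rewrite -{2}yy (grp_assoc HG) (grp_inv_l HG) (grp_id_l HG).
Qed.

Lemma mulgV x : mul x (inv x) = one.
Proof.
apply: mulg_idem_eq1.
by rewrite -(grp_assoc HG) (grp_assoc HG (inv x)) (grp_inv_l HG) (grp_id_l HG).
Qed.

Lemma mulg1 x : mul x one = x.
Proof. by rewrite -(grp_inv_l HG x) (grp_assoc HG) mulgV (grp_id_l HG). Qed.

Lemma morph_one (f : G -> G) :
  (forall x y, f (mul x y) = mul (f x) (f y)) -> f one = one.
Proof. by move=> fM; apply: mulg_idem_eq1; rewrite -fM (grp_id_l HG). Qed.

End GroupAxioms.

Lemma iter_fix (T : Type) (f : T -> T) (a : T) n : f a = a -> iter n f a = a.
Proof. by move=> fa; elim: n => [|n /= ->]. Qed.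

Lemma iter_eq_fix_le (T : Type) (f : T -> T) (a x : T) i n :
  f a = a -> i <= n -> iter i f x = a -> iter n f x = a.
Proof. by move=> fa /subnK <- ix; rewrite iterD ix iter_fix. Qed.

Lemma ncl_sub (A : finType) (S T : FG A -> Prop) :
  (forall s, S s -> T s) -> forall w, ncl S w -> ncl T w.
Proof.
move=> ST w; elim=> [s g /ST Ts| |x y _ nx _ ny|x _ nx].
- exact: ncl_conj.
- exact: ncl_one.
- exact: ncl_mul.
- exact: ncl_inv.
Qed.

Lemma ncl_N0 (A : finType) (R : seq (FG A)) (phi : FG A -> FG A) w :
  ncl (fun r => List.In r R) w -> N0 R phi w.
Proof. by apply: ncl_sub => r Rr; exists 0, r. Qed.

Section AscendingHNN.
Variables (A : finType) (R : seq (FG A)).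
Variables (A0 : Type) (mul0 : A0 -> A0 -> A0) (inv0 : A0 -> A0) (one0 : A0).
Hypothesis HA0 : is_group mul0 inv0 one0.
Variable q : FG A -> A0.
Hypothesis q_mul : forall x y, q (fg_mul x y) = mul0 (q x) (q y).
Hypothesis q_surj : forall g : A0, exists w, q w = g.
Hypothesis q_ker : forall w, q w = one0 <-> ncl (fun r => List.In r R) w.
Variable phi0 : A0 -> A0.
Hypothesis phi0_mul : forall x y, phi0 (mul0 x y) = mul0 (phi0 x) (phi0 y).
Variable phi : FG A -> FG A.
Hypothesis q_phi : forall w, q (phi w) = phi0 (q w).

Lemma q_iter n w : q (iter n phi w) = iter n phi0 (q w).
Proof. by elim: n => [|n /= <-]. Qed.

Lemma q_relator r : List.In r R -> q r = one0.
Proof.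
move=> Rr.
have q1 : q (fg_one A) = one0 by apply/q_ker; apply: ncl_one.
have qV1 : q (fg_inv (fg_one A)) = one0 by apply/q_ker; apply/ncl_inv/ncl_one.
(* No group laws of F(A) are available, so q r is read off the conjugate of r by the empty word. *)
have /q_ker := ncl_conj (S := fun r => List.In r R) (fg_one A) Rr.
by rewrite !q_mul q1 qV1 (grp_id_l HA0) (mulg1 HA0).
Qed.

Lemma q_N0 w : N0 R phi w -> q w = one0.
Proof.
have phi0_1 := morph_one HA0 phi0_mul.
elim=> [_ g [j [r [Rr ->]]]| |x y _ qx _ qy|x _ qx].
- have /q_ker := ncl_conj (S := fun r => List.In r R) g Rr.
  by rewrite !q_mul q_iter (q_relator Rr) iter_fix.
- by apply/q_ker; apply: ncl_one.
- by rewrite q_mul qx qy (grp_id_l HA0).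
- by apply/q_ker; apply/ncl_inv/q_ker.
Qed.

Lemma bounded_depth_iter_ker_stable B m x :
  (forall w, Ninf R phi w <-> exists i, i <= B /\ N0 R phi (iter i phi w)) ->
  iter m phi0 x = one0 -> iter B phi0 x = one0.
Proof.
move=> depthB; have phi0_1 := morph_one HA0 phi0_mul.
have [w <-] := q_surj x; rewrite -!q_iter => mw.
have [|i [iB /q_N0]] := proj1 (depthB w).
  by exists m; apply: ncl_N0; apply/q_ker.
by rewrite q_iter => /(iter_eq_fix_le phi0_1 iB); rewrite q_iter.
Qed.

End AscendingHNN.

Theorem theorem4p5
  (A : finType) (R : seq (FG A))
  (* the group A_0 = <A : R> *)
  (A0 : Type) (mul0 : A0 -> A0 -> A0) (inv0 : A0 -> A0) (one0 : A0)
  (HA0 : is_group mul0 inv0 one0)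
  (* the quotient map q : F(A) -> A_0, an epimorphism with kernel N(R) *)
  (q : FG A -> A0)
  (Hq_hom : forall x y, q (fg_mul x y) = mul0 (q x) (q y))
  (Hq_surj : forall g : A0, exists w, q w = g)
  (Hq_ker : forall w, q w = one0 <-> ncl (fun r => List.In r R) w)
  (* phi_0 : A_0 -> A_0 a homomorphism with nontrivial kernel K_0 *)
  (phi0 : A0 -> A0)
  (Hphi0_hom : forall x y, phi0 (mul0 x y) = mul0 (phi0 x) (phi0 y))
  (HK0 : exists x, phi0 x = one0 /\ x <> one0)
  (* phi : F(A) -> F(A) a homomorphism lifting phi_0 *)
  (phi : FG A -> FG A) (Hphi_hom : fg_hom phi)
  (Hlift : forall w, q (phi w) = phi0 (q w))
  (* K_i = ker (phi_0^(i+1)) does not stabilize *)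
  (Hnstab : ~ exists n, forall m, n <= m ->
              forall x, iter m.+1 phi0 x = one0 <-> iter n.+1 phi0 x = one0) :
  unbounded_depth R phi.
Proof.
move=> [B depthB]; apply: Hnstab; exists B => m Bm x; split.
- move=> /(bounded_depth_iter_ker_stable HA0 Hq_hom Hq_surj Hq_ker Hphi0_hom Hlift depthB).
  exact: iter_eq_fix_le (morph_one HA0 Hphi0_hom) (leqnSn B).
- exact: iter_eq_fix_le (morph_one HA0 Hphi0_hom) (Bm : B < m.+1).
Qed.
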